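(* For every $t\in\mathbb{R}$, the points $\mathbf R(t),\mathbf R(t+\tfrac13),\mathbf R(t+\tfrac23)$ are mutually orthogonal, and the closure of the open octant $$O(t):=\{\mathbf r\in S^2 : \mathbf r\cdot\mathbf R(t+s)>0 \text{ for all } s\in\{0,\tfrac13,\tfrac23\}\}$$ satisfies $\overline{O(t)}\subseteq A$.
   Context: For $t\in[-\tfrac12,0)$ define points of $S^2\subset\mathbb{R}^3$: $\mathbf r_1(t)=\big(\tfrac{1}{\sqrt2},\,t,\,\sqrt{\tfrac12-t^2}\big)$, $\mathbf r_2(t)=\Big(-\tfrac{\frac12+t}{1+t},\,\tfrac1{\sqrt2},\,\tfrac1{\sqrt2}\tfrac{\sqrt{\frac12-t^2}}{1+t}\Big)$, $\mathbf r_3(t)=\mathbf r_1(t)\times\mathbf r_2(t)=\Big(-\tfrac1{\sqrt2}\tfrac{\sqrt{\frac12-t^2}}{1+t},\,-\sqrt{\tfrac12-t^2},\,\tfrac{\frac12+t+t^2}{1+t}\Big)$. Let $R_{\pi/2}$ be the rotation $(x,y,z)\mapsto(-y,x,z)$ (by $\pi/2$ about the $z$-axis). Define $\mathbf r_0:[0,\tfrac14)\to S^2$ by $\mathbf r_0(t)=\mathbf r_1(6t-\tfrac12)$ for $t\in[0,\tfrac1{12})$, $\mathbf r_0(t)=R_{\pi/2}^3\mathbf r_2(6t-1)$ for $t\in[\tfrac1{12},\tfrac16)$, $\mathbf r_0(t)=R_{\pi/2}^2\mathbf r_3(6t-\tfrac32)$ for $t\in[\tfrac16,\tfrac14)$.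 Define $\mathbf R:[0,1)\to S^2$ by $\mathbf R(t)=R_{\pi/2}^k\,\mathbf r_0(t-\tfrac k4)$ for $t\in[\tfrac k4,\tfrac{k+1}4)$, $k=0,1,2,3$, and extend $\mathbf R$ to $\mathbb R$ periodically with period $1$: $\mathbf R(t):=\mathbf R(t-\lfloor t\rfloor)$. The image $\Gamma=\mathbf R(\mathbb R)$ is a closed curve on $S^2$; let $A\subseteq S^2$ be the closed region bounded by $\Gamma$ containing the north pole, i.e. $A=\Gamma\cup C$, where $C$ is the connected component of $S^2\setminus\Gamma$ containing $(0,0,1)$. *)

From HB Require Import structures.
From mathcomp Require Import all_boot all_order all_algebra.
From mathcomp Require Import all_classical all_reals all_analysis.
Set Implicit Arguments. Unset Strict Implicit. Unset Printing Implicit Defensive.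
Import Order.TTheory GRing.Theory Num.Theory.
Import numFieldNormedType.Exports.
Local Open Scope classical_set_scope.
Local Open Scope ring_scope.

Notation pt3 R := (R * R * R)%type.

Section Curve.
Variable R : realType.

Local Notation pt := (pt3 R).
Definition mkpt (x y z : R) : pt := (x, y, z).
Definition px (p : pt) := p.1.1.
Definition py (p : pt) := p.1.2.
Definition pz (p : pt) := p.2.

Definition dot (p q : pt) : R := px p * px q + py p * py q + pz p * pz q.
Definition cross (p q : pt) : pt :=
  mkpt (py p * pz q - pz p * py q)
       (pz p * px q - px p * pz q)
       (px p * py q - py p * px q).

Definition S2 : set pt := [set p | dot p p = 1].
Definition north_pole : pt := mkpt 0 0 1.

Definition rot (p : pt) : pt := mkpt (- py p) (px p) (pz p).

Definition s12 (t : R) : R := Num.sqrt (2^-1 - t ^+ 2).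
Definition isq2 : R := (Num.sqrt 2)^-1.

Definition r1 (t : R) : pt := mkpt isq2 t (s12 t).
Definition r2 (t : R) : pt :=
  mkpt (- ((2^-1 + t) / (1 + t))) isq2 (isq2 * (s12 t / (1 + t))).
Definition r3 (t : R) : pt := cross (r1 t) (r2 t).

(* r0 on [0, 1/4) *)
Definition r0 (t : R) : pt :=
  if t < 12^-1 then r1 (6 * t - 2^-1)
  else if t < 6^-1 then rot (rot (rot (r2 (6 * t - 1))))
  else rot (rot (r3 (6 * t - 3 / 2))).

Definition Rc0 (u : R) : pt :=
  if u < 4^-1 then r0 u
  else if u < 2^-1 then rot (r0 (u - 4^-1))
  else if u < 3 / 4 then rot (rot (r0 (u - 2^-1)))
  else rot (rot (rot (r0 (u - 3 / 4)))).

Definition Rcurve (t : R) : pt := Rc0 (t - (Num.floor t)%:~R).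

Definition Gamma : set pt := range Rcurve.

Definition regionA : set pt :=
  Gamma `|` connected_component (S2 `\` Gamma) north_pole.

Definition octant (t : R) : set pt :=
  [set r | S2 r /\ 0 < dot r (Rcurve t) /\ 0 < dot r (Rcurve (t + 3^-1))
                /\ 0 < dot r (Rcurve (t + 2 / 3))].

End Curve.

From Pilot Require Import Defs.
From mathcomp Require Import all_boot all_order all_algebra.
From mathcomp Require Import all_classical all_reals all_analysis.
From mathcomp Require Import ring lra zify.
Set Implicit Arguments. Unset Strict Implicit. Unset Printing Implicit Defensive.
Import Order.TTheory GRing.Theory Num.Theory.
Import numFieldNormedType.Exports.
Local Open Scope classical_set_scope.
Local Open Scope ring_scope.

(* On each twelfth of the period the curve is a rotation [R^m] of one of the
   arcs r1, r2, r3, and the shift t -> t + 1/3 passes to the next arc with the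
   same parameter w and the same rotation; so R(t), R(t+1/3), R(t+2/3) is the
   rotated orthonormal frame (r1 w, r2 w, r3 w), up to a cyclic shift.  The key
   inequality is that every point of the curve has a non-positive inner product
   with some vector of every such frame, so Gamma misses every open octant O(t).
   All frame vectors point into the upper hemisphere, hence O(t) contains the
   north pole and is connected (radially project the chords to the north pole);
   a point of its closure off Gamma is thus connected to the north pole within
   S^2 \ Gamma. *)

Section Rotation.
Variable R : realType.
Local Notation pt := (pt3 R).

Definition rotn (k : nat) (p : pt) : pt := iter k (@Defs.rot R) p.

Lemma dotC (p q : pt) : dot p q = dot q p.
Proof. by rewrite /dot; ring. Qed.

Lemma dot_rot (p q : pt) : dot (Defs.rot p) (Defs.rot q) = dot p q.
Proof. by rewrite /dot /Defs.rot /mkpt /px /py /pz /=; ring. Qed.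

Lemma dot_rotn k (p q : pt) : dot (rotn k p) (rotn k q) = dot p q.
Proof. by elim: k => // k IH; rewrite /rotn /= dot_rot. Qed.

Lemma pz_rotn k (p : pt) : pz (rotn k p) = pz p.
Proof. by elim: k. Qed.

Lemma rotnD a b (p : pt) : rotn a (rotn b p) = rotn (a + b) p.
Proof. by rewrite /rotn iterD. Qed.

Lemma rotn_mod4 k (p : pt) : rotn k p = rotn (k %% 4) p.
Proof.
have rot4 q : rotn 4 q = q by case: q => [[x y] z]; rewrite /rotn /Defs.rot /mkpt /= !opprK.
rewrite {1}(divn_eq k 4) -rotnD; elim: (k %/ 4)%N => // n IH.
by rewrite mulSn -rotnD rot4.
Qed.

Lemma dot_rotn_l k m (p q : pt) :
  dot (rotn k p) (rotn m q) = dot (rotn ((k + 3 * m) %% 4) p) q.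
Proof.
rewrite -[RHS](dot_rotn m) rotnD (rotn_mod4 (m + _)) (rotn_mod4 k).
by congr (dot (rotn _ _) _); lia.
Qed.
End Rotation.

Section Frame.
Variables (R : realType) (h : R).
Local Notation pt := (pt3 R).

Definition frame1 (w σ : R) : pt := mkpt h w σ.
Definition frame2 (w σ : R) : pt :=
  mkpt (- ((2^-1 + w) / (1 + w))) h (h * (σ / (1 + w))).
Definition frame3 (w σ : R) : pt := cross (frame1 w σ) (frame2 w σ).

Definition frame (j : nat) : R -> R -> pt :=
  match j with 0 => frame1 | 1 => frame2 | _ => frame3 end.

Hypothesis hh : h * h = 2^-1.

Lemma frame3E (w σ : R) : 1 + w != 0 ->
  frame3 w σ = mkpt (- (h * σ / (1 + w))) (- σ) ((2^-1 + w + w ^+ 2) / (1 + w)).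
Proof.
move=> w1; rewrite /frame3 /cross /frame1 /frame2 /mkpt /px /py /pz /=.
by congr (pair (pair _ _) _); rewrite ?mulrA ?hh; field.
Qed.

Lemma dot_frame1_frame2 (w σ : R) : 1 + w != 0 -> σ ^+ 2 = 2^-1 - w ^+ 2 ->
  dot (frame1 w σ) (frame2 w σ) = 0.
Proof.
move=> w1 σE; rewrite /dot /frame1 /frame2 /mkpt /px /py /pz /=.
have -> : h * - ((2^-1 + w) / (1 + w)) + w * h + σ * (h * (σ / (1 + w))) =
  h * (- (2^-1 + w) + w * (1 + w) + σ ^+ 2) / (1 + w) by field.
by rewrite σE; field.
Qed.

Lemma dot_frame1_frame3 (w σ : R) : dot (frame1 w σ) (frame3 w σ) = 0.
Proof. by rewrite /frame3 /dot /cross /mkpt /px /py /pz /=; ring. Qed.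

Lemma dot_frame2_frame3 (w σ : R) : dot (frame2 w σ) (frame3 w σ) = 0.
Proof. by rewrite /frame3 /dot /cross /mkpt /px /py /pz /=; ring. Qed.

Lemma frame_orthogonal j (w σ : R) : (j < 3)%N -> 1 + w != 0 ->
  σ ^+ 2 = 2^-1 - w ^+ 2 ->
  [/\ dot (frame j w σ) (frame (j.+1 %% 3) w σ) = 0,
      dot (frame j w σ) (frame (j.+2 %% 3) w σ) = 0 &
      dot (frame (j.+1 %% 3) w σ) (frame (j.+2 %% 3) w σ) = 0].
Proof.
move=> j3 w1 σE; have d12 := dot_frame1_frame2 w1 σE.
have d13 := dot_frame1_frame3 w σ; have d23 := dot_frame2_frame3 w σ.
by case: j j3 => [|[|[|]]] //= _; split; rewrite // dotC.
Qed.

Hypothesis h_gt0 : 0 < h.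

Lemma pz_frame_gt0 j (w σ : R) : -2^-1 <= w -> 0 < σ -> 0 < pz (frame j w σ).
Proof.
move=> w1 σ0; have w1' : 0 < 1 + w by lra.
case: j => [|[|j]] //.
- by rewrite /pz /frame /frame2 /mkpt /=; apply: mulr_gt0 => //; apply: divr_gt0.
- rewrite /frame frame3E ?gt_eqF // /pz /mkpt /=; apply: divr_gt0 => //; nra.
Qed.
End Frame.

Section RealFacts.
Variable R : realFieldType.

Lemma le0_from_pmul (x y d : R) : 0 < d -> x * d = y -> y <= 0 -> x <= 0.
Proof. by move=> d0 <-; rewrite pmulr_lle0. Qed.

Lemma ler_from_sqr (x y : R) : 0 <= y -> x ^+ 2 <= y ^+ 2 -> x <= y.
Proof. by move=> y0 xy; case: (lerP x y) => // yx; nra. Qed.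

Lemma dot13_bound (s u : R) : -2^-1 <= s -> s <= 0 -> -2^-1 <= u -> u <= 0 -> u <= s ->
  (2^-1 - s ^+ 2) * (2^-1 + u + u ^+ 2) ^+ 2 <= (2^-1 - u ^+ 2) * (2^-1 + s + s * u) ^+ 2.
Proof.
move=> s1 s0 u1 u0 us.
have Q : 0 <= 2^-1 + 5/4*u + u^+2 + u^+3/2 + s*(3/4 + 2*u + 3/2*u^+2).
  have c : 0 < 3/4 + 2*u + 3/2*u^+2 by nra.
  have : 0 <= (1+2*u)*(1/8+u^+2/4) by nra.
  nra.
have -> : (2^-1 - u^+2) * (2^-1 + s + s*u)^+2 = (2^-1 - s^+2) * (2^-1 + u + u^+2)^+2 +
  (s-u) * (2^-1 + 5/4*u + u^+2 + u^+3/2 + s*(3/4 + 2*u + 3/2*u^+2)) by field.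
by rewrite lerDl; apply: mulr_ge0 => //; lra.
Qed.

Lemma dot23_bound (s u : R) : -2^-1 <= s -> s <= 0 -> -2^-1 <= u -> u <= 0 -> s <= u ->
  (2^-1 - s ^+ 2) * (2^-1 + u + u ^+ 2) ^+ 2 <= (2^-1 - u ^+ 2) * (2^-1 + u + s * u) ^+ 2.
Proof.
move=> s1 s0 u1 u0 su.
have Q : 3/4*u + 2*u^+2 + 3/2*u^+3 + s*(1/4 + u + 5/2*u^+2 + 2*u^+3) <= 0.
  have c : 0 < 1/4 + u + 5/2*u^+2 + 2*u^+3.
    have : 0 <= u^+2*(2*u+1) by nra.
    nra.
  have c2 : 0 < 3/4 + 2*u + 3/2*u^+2 by nra.
  nra.
have -> : (2^-1 - u^+2) * (2^-1 + u + s*u)^+2 = (2^-1 - s^+2) * (2^-1 + u + u^+2)^+2 +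
  (s-u) * (3/4*u + 2*u^+2 + 3/2*u^+3 + s*(1/4 + u + 5/2*u^+2 + 2*u^+3)) by field.
by rewrite lerDl; apply: mulr_le0 => //; lra.
Qed.
End RealFacts.

Section Separation.
Variables (R : realType) (h s u σ τ : R).
Hypotheses (hh : h * h = 2^-1) (h_gt0 : 0 < h).
Hypotheses (s_ge : -2^-1 <= s) (s_le0 : s <= 0) (u_ge : -2^-1 <= u) (u_le0 : u <= 0).
Hypotheses (σ_ge0 : 0 <= σ) (τ_ge0 : 0 <= τ).
Hypotheses (σE : σ ^+ 2 = 2^-1 - s ^+ 2) (τE : τ ^+ 2 = 2^-1 - u ^+ 2).

(* [lra]/[nra] ignore section hypotheses, so they are moved into the goal. *)
Local Ltac facts :=
  move: hh h_gt0 s_ge s_le0 u_ge u_le0 σ_ge0 τ_ge0 σE τE => *.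

Let s1_gt0 : 0 < 1 + s. Proof. by facts; lra. Qed.
Let u1_gt0 : 0 < 1 + u. Proof. by facts; lra. Qed.
Let s1_neq0 : 1 + s != 0 := lt0r_neq0 s1_gt0.
Let u1_neq0 : 1 + u != 0 := lt0r_neq0 u1_gt0.

Local Ltac field_sc := field; rewrite ?s1_neq0 ?u1_neq0.

Local Ltac unfold_dot :=
  rewrite ?(frame3E hh) // /dot /rotn /Defs.rot /frame1 /frame2 /mkpt /px /py /pz /=.

Lemma σ_le_h : σ <= h.
Proof. by apply: ler_from_sqr; rewrite ?σE ?expr2 ?hh; facts; nra. Qed.

Lemma τ_le_h : τ <= h.
Proof. by apply: ler_from_sqr; rewrite ?τE ?expr2 ?hh; facts; nra. Qed.

Lemma σ_le_1s : σ <= 1 + s.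
Proof. by apply: ler_from_sqr; rewrite ?σE; facts; nra. Qed.

Lemma τ_le_1u : τ <= 1 + u.
Proof. by apply: ler_from_sqr; rewrite ?τE; facts; nra. Qed.

Lemma σ_ge_half : 2^-1 <= σ.
Proof. by case: (lerP (2^-1) σ) => // lt; facts; nra. Qed.

Lemma τ_ge_half : 2^-1 <= τ.
Proof. by case: (lerP (2^-1) τ) => // lt; facts; nra. Qed.

Lemma σ_mul_1s_ge : 2^-1 + s + s ^+ 2 <= σ * (1 + s).
Proof.
apply: ler_from_sqr; first by facts; nra.
rewrite exprMn σE; facts.
have : 0 <= (1 + 2 * s) * (2^-1 * 2^-1 - s / 2 - 3/2 * s ^+ 2 - s ^+ 3).
  apply: mulr_ge0; first lra.
  have : 0 <= s ^+ 2 * (1 + 2 * s) by nra.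
  nra.
nra.
Qed.

Lemma τ_mul_1u_ge : 2^-1 + u + u ^+ 2 <= τ * (1 + u).
Proof.
apply: ler_from_sqr; first by facts; nra.
rewrite exprMn τE; facts.
have : 0 <= (1 + 2 * u) * (2^-1 * 2^-1 - u / 2 - 3/2 * u ^+ 2 - u ^+ 3).
  apply: mulr_ge0; first lra.
  have : 0 <= u ^+ 2 * (1 + 2 * u) by nra.
  nra.
nra.
Qed.

Lemma σ_ge_2h_quad : 2 * h * (2^-1 + s + s ^+ 2) <= σ.
Proof.
apply: ler_from_sqr => //; rewrite !exprMn σE (expr2 h) hh; facts.
have : 0 <= - s * (2 + 5 * s + 4 * s ^+ 2 + 2 * s ^+ 3).
  apply: mulr_ge0; first lra.
  have : 0 <= s ^+ 2 * (1 + 2 * s) by nra.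
  nra.
nra.
Qed.

Lemma τ_ge_2h_quad : 2 * h * (2^-1 + u + u ^+ 2) <= τ.
Proof.
apply: ler_from_sqr => //; rewrite !exprMn τE (expr2 h) hh; facts.
have : 0 <= - u * (2 + 5 * u + 4 * u ^+ 2 + 2 * u ^+ 3).
  apply: mulr_ge0; first lra.
  have : 0 <= u ^+ 2 * (1 + 2 * u) by nra.
  nra.
nra.
Qed.

Lemma hστ_le : h * σ * τ <= 2^-1 * (1 + s + u + 2 * s * u).
Proof.
apply: ler_from_sqr.
  facts; have : 0 <= (1 + 2 * s) * (1 + 2 * u) by apply: mulr_ge0; lra.
  nra.
rewrite !exprMn σE τE (expr2 h) hh; facts.
have : 0 <= (1 + 2 * s + 2 * u + 2 * s * u) ^+ 2 by apply: sqr_ge0.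
nra.
Qed.

Lemma dot_frame1_frame2_le0 : s <= u -> dot (frame1 h s σ) (frame2 h u τ) <= 0.
Proof.
move=> su; unfold_dot; facts.
apply: (@le0_from_pmul _ _ (h * (- (2^-1 + u) + s * (1 + u) + σ * τ)) (1 + u)) => //.
  by field_sc.
apply: mulr_ge0_le0; first lra.
have : 0 <= (σ - τ) ^+ 2 by apply: sqr_ge0.
have : 0 <= (u - s) * (2 + u - s) by apply: mulr_ge0; lra.
nra.
Qed.

Lemma dot_frame1_frame3_le0 : u <= s -> dot (frame1 h s σ) (frame3 h u τ) <= 0.
Proof.
move=> us; have F := dot13_bound s_ge s_le0 u_ge u_le0 us; unfold_dot; facts.
apply: (@le0_from_pmul _ _
  (- (h * h) * τ - s * τ * (1 + u) + σ * (2^-1 + u + u ^+ 2)) (1 + u)) => //.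
  by field_sc.
have : σ * (2^-1 + u + u ^+ 2) <= τ * (2^-1 + s + s * u).
  apply: ler_from_sqr; first by apply: mulr_ge0 => //; nra.
  by rewrite !exprMn σE τE; nra.
rewrite hh; nra.
Qed.

Lemma dot_frame2_frame1_le0 : u <= s -> dot (frame2 h s σ) (frame1 h u τ) <= 0.
Proof.
move=> us; unfold_dot; facts.
apply: (@le0_from_pmul _ _ (h * (- (2^-1 + s) + u * (1 + s) + σ * τ)) (1 + s)) => //.
  by field_sc.
apply: mulr_ge0_le0; first lra.
have : 0 <= (σ - τ) ^+ 2 by apply: sqr_ge0.
have : 0 <= (s - u) * (2 + s - u) by apply: mulr_ge0; lra.
nra.
Qed.

Lemma dot_frame2_frame3_le0 : s <= u -> dot (frame2 h s σ) (frame3 h u τ) <= 0.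
Proof.
move=> su; have F := dot23_bound s_ge s_le0 u_ge u_le0 su; unfold_dot; facts.
apply: (@le0_from_pmul _ _ (h * ((2^-1 + s) * τ - τ * (1 + s) * (1 + u)
  + σ * (2^-1 + u + u ^+ 2))) ((1 + s) * (1 + u)));
  [exact: mulr_gt0 | by field_sc |].
apply: mulr_ge0_le0; first lra.
have : σ * (2^-1 + u + u ^+ 2) <= τ * (2^-1 + u + s * u).
  apply: ler_from_sqr; first by apply: mulr_ge0 => //; nra.
  by rewrite !exprMn σE τE; nra.
nra.
Qed.

Lemma dot_frame3_frame1_le0 : s <= u -> dot (frame3 h s σ) (frame1 h u τ) <= 0.
Proof.
move=> su; have F := dot13_bound u_ge u_le0 s_ge s_le0 su; unfold_dot; facts.
apply: (@le0_from_pmul _ _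
  (- (h * h) * σ - σ * u * (1 + s) + (2^-1 + s + s ^+ 2) * τ) (1 + s)) => //.
  by field_sc.
have : τ * (2^-1 + s + s ^+ 2) <= σ * (2^-1 + u + u * s).
  apply: ler_from_sqr; first by apply: mulr_ge0 => //; nra.
  by rewrite !exprMn σE τE; nra.
rewrite hh; nra.
Qed.

Lemma dot_frame3_frame2_le0 : u <= s -> dot (frame3 h s σ) (frame2 h u τ) <= 0.
Proof.
move=> us; have F := dot23_bound u_ge u_le0 s_ge s_le0 us; unfold_dot; facts.
apply: (@le0_from_pmul _ _ (h * (σ * (2^-1 + u) - σ * (1 + s) * (1 + u)
  + (2^-1 + s + s ^+ 2) * τ)) ((1 + s) * (1 + u)));
  [exact: mulr_gt0 | by field_sc |].
apply: mulr_ge0_le0; first lra.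
have : τ * (2^-1 + s + s ^+ 2) <= σ * (2^-1 + s + u * s).
  apply: ler_from_sqr; first by apply: mulr_ge0 => //; nra.
  by rewrite !exprMn σE τE; nra.
nra.
Qed.

Lemma dot_rot_frame1_frame3_le0 : dot (rotn 1 (frame1 h s σ)) (frame3 h u τ) <= 0.
Proof.
have S := σ_le_h; have T := τ_mul_1u_ge; unfold_dot; facts.
apply: (@le0_from_pmul _ _
  (s * h * τ - h * τ * (1 + u) + σ * (2^-1 + u + u ^+ 2)) (1 + u)) => //.
  by field_sc.
have c0 : 0 <= 2^-1 + u + u ^+ 2 by nra.
have e1 : σ * (2^-1 + u + u ^+ 2) <= h * (2^-1 + u + u ^+ 2) by apply: ler_wpM2r.
have e2 : h * (2^-1 + u + u ^+ 2) <= h * (τ * (1 + u)) by apply: ler_wpM2l => //; lra.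
have e3 : s * h * τ <= 0.
  by apply: mulr_le0_ge0 => //; apply: mulr_le0_ge0 => //; lra.
nra.
Qed.

Lemma dot_rot_frame2_frame1_le0 : dot (rotn 1 (frame2 h s σ)) (frame1 h u τ) <= 0.
Proof.
have T := hστ_le; unfold_dot; facts.
apply: (@le0_from_pmul _ _
  (- (h * h) * (1 + s) - (2^-1 + s) * u + h * σ * τ) (1 + s)) => //.
  by field_sc.
rewrite hh; nra.
Qed.

Lemma dot_rot_frame3_frame2_le0 : dot (rotn 1 (frame3 h s σ)) (frame2 h u τ) <= 0.
Proof.
have T := σ_ge_2h_quad; have tb := τ_le_1u; unfold_dot; facts.
apply: (@le0_from_pmul _ _ (- σ * (2^-1 + u) * (1 + s) - h * h * σ * (1 + u)
  + (2^-1 + s + s ^+ 2) * h * τ) ((1 + s) * (1 + u)));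
  [exact: mulr_gt0 | by field_sc |].
rewrite hh; have c0 : 0 <= 2^-1 + s + s ^+ 2 by nra.
have : 0 <= σ * (1 + s) * (2^-1 + u) by apply: mulr_ge0; [apply: mulr_ge0|]; lra.
nra.
Qed.

Lemma dot_rot2_frame1_frame1_le0 : dot (rotn 2 (frame1 h s σ)) (frame1 h u τ) <= 0.
Proof.
unfold_dot; facts.
have : 0 <= (σ - τ) ^+ 2 by apply: sqr_ge0.
nra.
Qed.

Lemma dot_rot2_frame2_frame2_le0 : dot (rotn 2 (frame2 h s σ)) (frame2 h u τ) <= 0.
Proof.
unfold_dot; facts.
apply: (@le0_from_pmul _ _ (- (2^-1 + s) * (2^-1 + u) - h * h * (1 + s) * (1 + u)
  + h * h * σ * τ) ((1 + s) * (1 + u)));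
  [exact: mulr_gt0 | by field_sc |].
have : 0 <= (σ - τ) ^+ 2 by apply: sqr_ge0.
have : 0 <= (s + 2^-1) * (u + 2^-1) by apply: mulr_ge0; lra.
rewrite hh; nra.
Qed.

Lemma dot_rot2_frame3_frame3_le0 : dot (rotn 2 (frame3 h s σ)) (frame3 h u τ) <= 0.
Proof.
have S := σ_ge_half; have T := τ_ge_half; unfold_dot; facts.
apply: (@le0_from_pmul _ _ (- (h * h) * σ * τ - σ * τ * (1 + s) * (1 + u)
  + (2^-1 + s + s ^+ 2) * (2^-1 + u + u ^+ 2)) ((1 + s) * (1 + u)));
 
  [exact: mulr_gt0 | by field_sc |].
rewrite hh.
have e1 : 0 <= 2^-1 + s + s ^+ 2 by nra.
have e1' : 2^-1 + s + s ^+ 2 <= (1 + s) / 2 by nra.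
have e2 : 0 <= 2^-1 + u + u ^+ 2 by nra.
have e2' : 2^-1 + u + u ^+ 2 <= (1 + u) / 2 by nra.
have : (2^-1 + s + s ^+ 2) * (2^-1 + u + u ^+ 2) <= (1 + s) / 2 * ((1 + u) / 2).
  exact: ler_pM.
have : 2^-1 * 2^-1 <= σ * τ by apply: ler_pM; lra.
have : 0 <= (1 + s) * (1 + u) by apply: mulr_ge0; lra.
nra.
Qed.

Lemma dot_rot3_frame1_frame2_le0 : dot (rotn 3 (frame1 h s σ)) (frame2 h u τ) <= 0.
Proof.
have T := hστ_le; unfold_dot; facts.
apply: (@le0_from_pmul _ _
  (- s * (2^-1 + u) - h * h * (1 + u) + σ * h * τ) (1 + u)) => //.
  by field_sc.
rewrite hh; nra.
Qed.

Lemma dot_rot3_frame2_frame3_le0 : dot (rotn 3 (frame2 h s σ)) (frame3 h u τ) <= 0.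
Proof.
have T := τ_ge_2h_quad; have sb := σ_le_1s; unfold_dot; facts.
apply: (@le0_from_pmul _ _ (- (h * h) * τ * (1 + s) - (2^-1 + s) * τ * (1 + u)
  + h * σ * (2^-1 + u + u ^+ 2)) ((1 + s) * (1 + u)));
  [exact: mulr_gt0 | by field_sc |].
rewrite hh; have c0 : 0 <= 2^-1 + u + u ^+ 2 by nra.
have : 0 <= τ * (1 + u) * (2^-1 + s) by apply: mulr_ge0; [apply: mulr_ge0|]; lra.
nra.
Qed.

Lemma dot_rot3_frame3_frame1_le0 : dot (rotn 3 (frame3 h s σ)) (frame1 h u τ) <= 0.
Proof.
have S := τ_le_h; have T := σ_mul_1s_ge; unfold_dot; facts.
apply: (@le0_from_pmul _ _
  (- σ * h * (1 + s) + h * σ * u + (2^-1 + s + s ^+ 2) * τ) (1 + s)) => //.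
  by field_sc.
have c0 : 0 <= 2^-1 + s + s ^+ 2 by nra.
have e1 : (2^-1 + s + s ^+ 2) * τ <= (2^-1 + s + s ^+ 2) * h by apply: ler_wpM2l.
have e2 : h * (2^-1 + s + s ^+ 2) <= h * (σ * (1 + s)) by apply: ler_wpM2l => //; lra.
have e3 : h * σ * u <= 0 by apply: mulr_ge0_le0 => //; apply: mulr_ge0; lra.
nra.
Qed.

Lemma frame_separation k j : (k < 4)%N -> (j < 3)%N ->
  exists2 i, (i < 3)%N & dot (rotn k (frame h j s σ)) (frame h i u τ) <= 0.
Proof.
case: k => [|[|[|[|//]]]] _; case: j => [|[|[|//]]] _.
- have [su|/ltW us] := lerP s u; [exists 1%N | exists 2%N] => //.
  + exact: dot_frame1_frame2_le0.
  + exact: dot_frame1_frame3_le0.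
- have [su|/ltW us] := lerP s u; [exists 2%N | exists 0%N] => //.
  + exact: dot_frame2_frame3_le0.
  + exact: dot_frame2_frame1_le0.
- have [su|/ltW us] := lerP s u; [exists 0%N | exists 1%N] => //.
  + exact: dot_frame3_frame1_le0.
  + exact: dot_frame3_frame2_le0.
- by exists 2%N => //; apply: dot_rot_frame1_frame3_le0.
- by exists 0%N => //; apply: dot_rot_frame2_frame1_le0.
- by exists 1%N => //; apply: dot_rot_frame3_frame2_le0.
- by exists 0%N => //; apply: dot_rot2_frame1_frame1_le0.
- by exists 1%N => //; apply: dot_rot2_frame2_frame2_le0.
- by exists 2%N => //; apply: dot_rot2_frame3_frame3_le0.
- by exists 1%N => //; apply: dot_rot3_frame1_frame2_le0.
- by exists 2%N => //; apply: dot_rot3_frame2_frame3_le0.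
- by exists 0%N => //; apply: dot_rot3_frame3_frame1_le0.
Qed.

End Separation.

Section Parametrization.
Variable R : realType.
Local Notation pt := (pt3 R).

Definition rarc (j : nat) : R -> pt :=
  match j with 0 => @r1 R | 1 => @r2 R | _ => @r3 R end.

Lemma rarc_frame j (w : R) : rarc j w = frame (isq2 R) j w (s12 w).
Proof. by case: j => [|[|]]. Qed.

(* On the twelfth [P/12, (P+1)/12) of [0, 1) the curve runs along the arc
   [r_(P mod 3)] rotated by [R^(P/3 - P mod 3)], as the definition of [r0] shows. *)
Definition twelfth_rot (P : nat) : nat := (P %/ 3 + (4 - P %% 3) %% 4)%N.

Definition twelfth (P : nat) (u : R) := P%:R / 12 <= u < (P%:R + 1) / 12.

Definition twelfth_param (P : nat) (u : R) : R := 6 * u - (P%:R + 1) / 2.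

Local Ltac eval_ifs := repeat first
  [ rewrite ifT; last by lra | rewrite ifN; last by rewrite -leNgt; lra ].

Local Ltac peel := repeat first
  [ apply: (congr1 (@Defs.rot R)) | apply: (congr1 (@r1 R))
  | apply: (congr1 (@r2 R)) | apply: (congr1 (@r3 R)) ].

Lemma Rc0_twelfth P u : (P < 12)%N -> twelfth P u ->
  Rc0 u = rotn (twelfth_rot P) (rarc (P %% 3) (twelfth_param P u)).
Proof.
rewrite /twelfth /twelfth_param /Rc0 /r0 => + /andP[l1 l2].
do 12?[case: P l1 l2 => [|P] l1 l2; first by move=> _; eval_ifs;
  rewrite /twelfth_rot /rotn /=; peel; field].
by [].
Qed.

Lemma twelfth_exists u : 0 <= u < 1 -> exists2 P, (P < 12)%N & twelfth P u.
Proof.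
move=> /andP[u0 u1]; have u12 : 0 <= 12 * u by lra.
have /andP[t1 t2] := truncn_itv u12; rewrite -[(Num.truncn _).+1%:R]natr1 in t2.
exists (Num.truncn (12 * u)); first by rewrite truncn_lt_nat //; lra.
by rewrite /twelfth; apply/andP; split; lra.
Qed.

Lemma twelfth_param_itv P u : twelfth P u -> -2^-1 <= twelfth_param P u < 0.
Proof. by rewrite /twelfth /twelfth_param => /andP[l1 l2]; apply/andP; split; lra. Qed.

Definition shift3 (u : R) : R := if u < 2 / 3 then u + 3^-1 else u - 2 / 3.

Lemma twelfth_shift3 P u : (P < 12)%N -> twelfth P u ->
  [/\ ((P + 4) %% 12 < 12)%N, twelfth ((P + 4) %% 12) (shift3 u) &
      twelfth_param ((P + 4) %% 12) (shift3 u) = twelfth_param P u].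
Proof.
rewrite /twelfth /twelfth_param /shift3 => P12 /andP[l1 l2].
rewrite ltn_pmod //; have [P8|P8] := ltnP P 8.
- have P7 : P%:R <= 7%:R :> R by rewrite ler_nat -ltnS.
  rewrite ifT; last by lra.
  rewrite modn_small; last by lia.
  by rewrite natrD; split => //; [apply/andP; split|]; lra.
- have P8' : 8%:R <= P%:R :> R by rewrite ler_nat.
  rewrite ifN; last by rewrite -leNgt; lra.
  have -> : ((P + 4) %% 12 = P - 8)%N by lia.
  by rewrite natrB //; split => //; [apply/andP; split|]; lra.
Qed.

Lemma twelfth_rot_shift P : (P < 12)%N ->
  (twelfth_rot ((P + 4) %% 12) %% 4 = twelfth_rot P %% 4)%N.
Proof. by rewrite /twelfth_rot; lia. Qed.

Lemma Rc0_triple u : 0 <= u < 1 -> exists m j w, [/\ (j < 3)%N, -2^-1 <= w < 0,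
  Rc0 u = rotn m (rarc j w), Rc0 (shift3 u) = rotn m (rarc (j.+1 %% 3) w) &
  Rc0 (shift3 (shift3 u)) = rotn m (rarc (j.+2 %% 3) w)].
Proof.
move=> u01; have [P P12 uP] := twelfth_exists u01.
have [P'12 uP' wP'] := twelfth_shift3 P12 uP.
have [P''12 uP'' wP''] := twelfth_shift3 P'12 uP'.
exists (twelfth_rot P), (P %% 3)%N, (twelfth_param P u); split.
- by rewrite ltn_pmod.
- exact: twelfth_param_itv.
- exact: Rc0_twelfth.
- rewrite (Rc0_twelfth P'12 uP') wP' rotn_mod4 twelfth_rot_shift // -rotn_mod4.
  by congr (rotn _ (rarc _ _)); lia.
- rewrite (Rc0_twelfth P''12 uP'') wP'' wP' rotn_mod4 !twelfth_rot_shift // -rotn_mod4.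
  by congr (rotn _ (rarc _ _)); lia.
Qed.

Definition frac (t : R) : R := t - (Num.floor t)%:~R.

Lemma frac_itv t : 0 <= frac t < 1.
Proof.
by have /andP[] := floor_itv t; rewrite /frac intrD /= => *; apply/andP; split; lra.
Qed.

Lemma frac_add_third t : frac (t + 3^-1) = shift3 (frac t).
Proof.
have /andP[f0 f1] := frac_itv t; rewrite /shift3 /frac in f0 f1 *.
set n := Num.floor t in f0 f1 *.
have [lt|ge] := ltrP (t - n%:~R) (2 / 3).
- rewrite (@floor_def _ _ n); first by ring.
  by rewrite intrD /=; apply/andP; split; lra.
- rewrite (@floor_def _ _ (n + 1)); first by rewrite intrD /=; field.
  by rewrite !intrD /=; apply/andP; split; lra.
Qed.

Lemma Rcurve_triple t : exists m j w, [/\ (j < 3)%N, -2^-1 <= w < 0,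
  Rcurve t = rotn m (rarc j w), Rcurve (t + 3^-1) = rotn m (rarc (j.+1 %% 3) w) &
  Rcurve (t + 2 / 3) = rotn m (rarc (j.+2 %% 3) w)].
Proof.
have [m [j [w [j3 w01 E0 E1 E2]]]] := Rc0_triple (frac_itv t).
exists m, j, w; split => //.
- by rewrite -E1 -frac_add_third.
- by rewrite -E2 -!frac_add_third (_ : t + 2 / 3 = t + 3^-1 + 3^-1) //; field.
Qed.

End Parametrization.

Arguments rarc {R}.

Section ArcFrames.
Variable R : realType.

Lemma isq2_sq : isq2 R * isq2 R = 2^-1.
Proof. by rewrite /isq2 -invfM -expr2 sqr_sqrtr // ler0n. Qed.

Lemma isq2_gt0 : 0 < isq2 R.
Proof. by rewrite /isq2 invr_gt0 sqrtr_gt0 ltr0n. Qed.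

Lemma s12_sq (w : R) : -2^-1 <= w < 0 -> s12 w ^+ 2 = 2^-1 - w ^+ 2.
Proof. by move=> /andP[w1 w0]; rewrite /s12 sqr_sqrtr //; nra. Qed.

Lemma s12_gt0 (w : R) : -2^-1 <= w < 0 -> 0 < s12 w.
Proof. by move=> /andP[w1 w0]; rewrite /s12 sqrtr_gt0; nra. Qed.

Lemma rarc_orthogonal j (w : R) : (j < 3)%N -> -2^-1 <= w < 0 ->
  [/\ dot (rarc j w) (rarc (j.+1 %% 3) w) = 0,
      dot (rarc j w) (rarc (j.+2 %% 3) w) = 0 &
      dot (rarc (j.+1 %% 3) w) (rarc (j.+2 %% 3) w) = 0].
Proof.
move=> j3 w01; rewrite !rarc_frame; apply: frame_orthogonal => //; last exact: s12_sq.
by case/andP: w01 => w1 w0; rewrite gt_eqF //; lra.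
Qed.

Lemma pz_rarc_gt0 j (w : R) : -2^-1 <= w < 0 -> 0 < pz (rarc j w).
Proof.
move=> w01; rewrite rarc_frame; apply: pz_frame_gt0; first exact: isq2_sq.
- exact: isq2_gt0.
- by case/andP: w01.
- exact: s12_gt0.
Qed.

Lemma rarc_separation k j (s u : R) : (k < 4)%N -> (j < 3)%N ->
  -2^-1 <= s < 0 -> -2^-1 <= u < 0 ->
  exists2 i, (i < 3)%N & dot (rotn k (rarc j s)) (rarc i u) <= 0.
Proof.
move=> k4 j3 s01 u01; have /andP[s1 s0] := s01; have /andP[u1 u0] := u01.
have [i i3 le] := frame_separation isq2_sq isq2_gt0 s1 (ltW s0) u1 (ltW u0)
  (sqrtr_ge0 _) (sqrtr_ge0 _) (s12_sq s01) (s12_sq u01) k4 j3.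
by exists i; rewrite // !rarc_frame.
Qed.

Definition open_octant (e1 e2 e3 : pt3 R) : set (pt3 R) :=
  [set r | S2 r /\ 0 < dot r e1 /\ 0 < dot r e2 /\ 0 < dot r e3].

Lemma Gamma_not_in_arc_octant m j (w : R) r : (j < 3)%N -> -2^-1 <= w < 0 ->
  Gamma r -> ~ open_octant (rotn m (rarc j w)) (rotn m (rarc (j.+1 %% 3) w))
                           (rotn m (rarc (j.+2 %% 3) w)) r.
Proof.
move=> j3 w01 [t _ <-] [_ [d1 [d2 d3]]].
have [m' [j' [w' [j3' w01' Et _ _]]]] := Rcurve_triple t.
have [i i3 le] :=
  rarc_separation (ltn_pmod (m' + 3 * m) (isT : (0 < 4)%N)) j3' w01' w01.
rewrite Et !dot_rotn_l in d1 d2 d3.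
by case: j j3 d1 d2 d3 => [|[|[|]]] // _ d1 d2 d3; case: i i3 le => [|[|[|]]] // _ le;
  rewrite /= in d2 d3; lra.
Qed.

End ArcFrames.

Lemma connected_between (T : topologicalType) (A B : set T) :
  connected A -> A `<=` B -> B `<=` closure A -> connected B.
Proof.
move=> cA AB BA; apply/connectedP => E [E0 BE [sE1 sE2]].
have AE : A `<=` E false `|` E true by rewrite -BE.
have [AF|AT] := connected_subset (conj sE1 sE2) AE cA.
- have [y Ey] := E0 true.
  suff : (closure (E false) `&` E true) y by rewrite sE1.
  by split=> //; apply: (closureS AF); apply: BA; rewrite BE; right.
- have [y Ey] := E0 false.
  suff : (E false `&` closure (E true)) y by rewrite sE2.
  by split=> //; apply: (closureS AT); apply: BA; rewrite BE; left.
Qed.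

Section SphereTopology.
Variable R : realType.
Local Notation pt := (pt3 R).

Lemma px_continuous : continuous (@px R).
Proof. by move=> p; apply: (@continuous_comp _ _ _ fst fst); apply: cvg_fst. Qed.

Lemma py_continuous : continuous (@py R).
Proof.
by move=> p; apply: (@continuous_comp _ _ _ fst snd); [apply: cvg_fst | apply: cvg_snd].
Qed.

Lemma pz_continuous : continuous (@pz R).
Proof. by move=> p; apply: cvg_snd. Qed.

Lemma mkpt_continuous_at (T : topologicalType) (f g k : T -> R) x :
  {for x, continuous f} -> {for x, continuous g} -> {for x, continuous k} ->
  {for x, continuous (fun y => mkpt (f y) (g y) (k y))}.
Proof.
move=> cf cg ck; rewrite /mkpt /prop_for /continuous_at.
apply: (@cvg_pair _ _ _ _ (nbhs (f x, g x)) (nbhs (k x))) => //.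
exact: (@cvg_pair _ _ _ _ (nbhs (f x)) (nbhs (g x))).
Qed.

Lemma dot_self_continuous : continuous (fun p : pt => dot p p).
Proof.
have -> : (fun p : pt => dot p p) = @px R \* @px R + @py R \* @py R + @pz R \* @pz R by [].
move=> p; apply: continuousD; [apply: continuousD|]; apply: continuousM;
  by [apply: px_continuous | apply: py_continuous | apply: pz_continuous].
Qed.

Lemma S2_closed : closed (@S2 R).
Proof.
have -> : @S2 R = (fun p => dot p p) @^-1` [set 1] by [].
by apply: preimage_closed => // p _; apply: dot_self_continuous.
Qed.

Lemma dot_self_gt0 (q e : pt) : 0 < dot q e -> 0 < dot q q.
Proof.
case: q => [[x y] z]; rewrite /dot /px /py /pz /= => qe.
have sq0 (a : R) : 0 <= a * a by rewrite -expr2 sqr_ge0.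
rewrite lt_neqAle; apply/andP; split; last by rewrite !addr_ge0.
apply/eqP => Q0; have sq_eq0 (a : R) : a * a = 0 -> a = 0.
  by move/eqP; rewrite mulf_eq0 orbb => /eqP.
have := sq0 x; have := sq0 y; have := sq0 z => z2 y2 x2.
have x0 : x = 0 by apply: sq_eq0; lra.
have y0 : y = 0 by apply: sq_eq0; lra.
have z0 : z = 0 by apply: sq_eq0; lra.
by move: qe; rewrite x0 y0 z0 !mul0r !addr0 ltxx.
Qed.

Definition normalize (q : pt) : pt :=
  mkpt (px q / Num.sqrt (dot q q)) (py q / Num.sqrt (dot q q)) (pz q / Num.sqrt (dot q q)).

Lemma dot_normalize (q e : pt) : dot (normalize q) e = dot q e / Num.sqrt (dot q q).
Proof. by rewrite /normalize /dot /mkpt /px /py /pz /=; ring. Qed.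

Lemma S2_normalize (q : pt) : 0 < dot q q -> S2 (normalize q).
Proof.
move=> q0; rewrite /S2 /= dot_normalize dotC dot_normalize -mulrA -invfM -expr2.
by rewrite sqr_sqrtr ?ltW // divff // gt_eqF.
Qed.

Lemma S2_north_pole : S2 (north_pole R).
Proof. by rewrite /S2 /= /dot /north_pole /mkpt /px /py /pz /= !mul0r !add0r mulr1. Qed.

Lemma normalize_id (q : pt) : S2 q -> normalize q = q.
Proof.
case: q => [[x y] z]; rewrite /S2 /normalize /= => ->.
by rewrite sqrtr1 !divr1.
Qed.

Lemma normalize_continuous_at (q : pt) : 0 < dot q q -> {for q, continuous normalize}.
Proof.
move=> q0; have n0 : Num.sqrt (dot q q) != 0 by rewrite sqrtr_eq0 -ltNge.
have cn : {for q, continuous (fun p : pt => (Num.sqrt (dot p p))^-1)}.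
  apply: continuousV => //; apply: continuous_comp; first exact: dot_self_continuous.
  exact: sqrt_continuous.
have cx : {for q, continuous (fun p : pt => px p / Num.sqrt (dot p p))}.
  by apply: continuousM; [exact: px_continuous | exact: cn].
have cy : {for q, continuous (fun p : pt => py p / Num.sqrt (dot p p))}.
  by apply: continuousM; [exact: py_continuous | exact: cn].
have cz : {for q, continuous (fun p : pt => pz p / Num.sqrt (dot p p))}.
  by apply: continuousM; [exact: pz_continuous | exact: cn].
exact: (mkpt_continuous_at cx cy cz).
Qed.

Definition chord (p : pt) (l : R) : pt :=
  mkpt ((1 - l) * px p) ((1 - l) * py p) ((1 - l) * pz p + l).

Lemma dot_chord (p e : pt) l : dot (chord p l) e = (1 - l) * dot p e + l * pz e.
Proof. by rewrite /chord /dot /mkpt /px /py /pz /=; ring. Qed.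

Lemma chord0 (p : pt) : chord p 0 = p.
Proof. by case: p => [[x y] z]; rewrite /chord /mkpt /px /py /pz /= subr0 !mul1r addr0. Qed.

Lemma chord1 (p : pt) : chord p 1 = north_pole R.
Proof. by rewrite /chord /north_pole subrr !mul0r add0r. Qed.

Lemma chord_continuous (p : pt) : continuous (chord p).
Proof.
have c1 : continuous (fun l : R => 1 - l).
  by move=> l; apply: continuousB; [exact: cst_continuous | exact: id].
move=> l.
have cM (a : R) : {for l, continuous (fun v : R => (1 - v) * a)}.
  by apply: continuousM; [exact: c1 | exact: cst_continuous].
have cz : {for l, continuous (fun v : R => (1 - v) * pz p + v)}.
  by apply: continuousD => //; apply: cM.
exact: (mkpt_continuous_at (cM (px p)) (cM (py p)) cz).
Qed.

Lemma convex_comb_gt0 (l d z : R) : 0 <= l <= 1 -> 0 < d -> 0 < z -> 0 < (1 - l) * d + l * z.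
Proof.
move=> /andP[l0 l1] d0 z0; have [hl|hl] := lerP l (2^-1).
- have : 0 <= l * z by apply: mulr_ge0 => //; lra.
  have : 2^-1 * d <= (1 - l) * d by apply: ler_wpM2r; lra.
  lra.
- have : 0 <= (1 - l) * d by apply: mulr_ge0 => //; lra.
  have : 2^-1 * z <= l * z by apply: ler_wpM2r; lra.
  lra.
Qed.

(* Radially projecting the chord from [p] to the north pole gives a path inside
   the octant, because every [e_i] has positive height. *)
Lemma open_octant_connected (e1 e2 e3 : pt) : 0 < pz e1 -> 0 < pz e2 -> 0 < pz e3 ->
  connected (open_octant e1 e2 e3).
Proof.
move=> z1 z2 z3; set O := open_octant e1 e2 e3.
have chord_in p l : O p -> 0 <= l <= 1 -> [/\ 0 < dot (chord p l) e1,
    0 < dot (chord p l) e2 & 0 < dot (chord p l) e3].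
  by move=> [_ [d1 [d2 d3]]] l01; rewrite !dot_chord; split; apply: convex_comb_gt0.
have unit01 : (1 : R) \in `[0, 1] /\ (0 : R) \in `[0, 1].
  by split; rewrite in_itv /= ?lexx ?ler01.
have path_in p : O p -> (normalize \o chord p) @` `[0, 1] `<=` O.
  move=> Op _ [l /= l01 <-]; move: l01; rewrite in_itv /= => l01.
  have [d1 d2 d3] := chord_in p l Op l01.
  have n0 : 0 < Num.sqrt (dot (chord p l) (chord p l)).
    by rewrite sqrtr_gt0; apply: dot_self_gt0 d1.
  split; first by apply: S2_normalize; apply: dot_self_gt0 d1.
  by rewrite !dot_normalize; split; [|split]; apply: divr_gt0.
have -> : O = \bigcup_(p in O) ((normalize \o chord p) @` `[0, 1]).
  apply/seteqP; split => [p Op|r [p Op]]; last exact: path_in.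
  exists p => //; exists 0; first by case: unit01.
  by rewrite /= chord0 normalize_id //; case: Op.
apply: bigcup_connected.
  exists (north_pole R) => p _; exists 1; first by case: unit01.
  by rewrite /= chord1 normalize_id //; exact: S2_north_pole.
move=> p Op; apply: connected_continuous_connected; first exact: segment_connected.
apply: continuous_in_subspaceT => l; rewrite inE /= in_itv /= => l01.
apply: continuous_comp; first exact: chord_continuous.
have [d1 _ _] := chord_in p l Op l01.
by apply: normalize_continuous_at; apply: dot_self_gt0 d1.
Qed.

End SphereTopology.

Lemma closure_open_octant_sub (R : realType) (e1 e2 e3 : pt3 R) :
  0 < pz e1 -> 0 < pz e2 -> 0 < pz e3 ->
  (forall r, Gamma r -> ~ open_octant e1 e2 e3 r) ->
  closure (open_octant e1 e2 e3) `<=` @regionA R.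
Proof.
move=> z1 z2 z3 avoid p cp; set O := open_octant e1 e2 e3.
have OS : O `<=` @S2 R `\` @Gamma R.
  by move=> r Or; split=> [|Gr]; [case: Or | exact: avoid Gr Or].
have Onp : O (north_pole R).
  have dnp e : dot (north_pole R) e = pz e.
    by rewrite /dot /north_pole /mkpt /px /py /pz /=; ring.
  by split; [exact: S2_north_pole | rewrite !dnp].
have [Gp|nGp] := pselect (Gamma p); [by left | right].
have Sp : S2 p by apply: S2_closed; apply: (closureS _ cp) => r [].
have cOp : connected (O `|` [set p]).
  apply: (connected_between (open_octant_connected z1 z2 z3)) => [r|r [Or|->]] //.
  - by left.
  - exact: subset_closure.
have OpS : O `|` [set p] `<=` @S2 R `\` @Gamma R by move=> r [/OS|->].
exact: (connected_component_max (or_introl Onp) OpS cOp (or_intror erefl)).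
Qed.

Theorem lemma3p3 (R : realType) (t : R) :
  [/\ dot (Rcurve t) (Rcurve (t + 3^-1)) = 0,
      dot (Rcurve t) (Rcurve (t + 2 / 3)) = 0,
      dot (Rcurve (t + 3^-1)) (Rcurve (t + 2 / 3)) = 0 &
      closure (octant t) `<=` @regionA R].
Proof.
have [m [j [w [j3 w01 E0 E1 E2]]]] := Rcurve_triple t.
have [d12 d13 d23] := rarc_orthogonal j3 w01.
rewrite /octant E0 E1 E2 !dot_rotn; split => //.
apply: closure_open_octant_sub; rewrite ?pz_rotn;
  try exact: pz_rarc_gt0 _ w01.
by move=> r; apply: Gamma_not_in_arc_octant.
Qed.
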